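(* Let $t>0$ and $w(x,t)=\mathrm{e}^{-x^{2}-t/x^{2}}$ for $x\in(-\infty,\infty)$, and let $\mathrm{v}(z)=-\ln w(z,t)=z^2+t/z^2$, so $\mathrm{v}'(z)=2z-2t/z^3$. Let $P_n(x)$ be the monic polynomials of degree $n$ orthogonal with respect to $w(x,t)$ on $\mathbb{R}$, with $\int_{-\infty}^{\infty}P_m(x)P_n(x)w(x,t)\,dx=h_n\delta_{mn}$, and define $$A_{n}(z):=\frac{1}{h_{n}}\int_{-\infty}^{\infty}\frac{\mathrm{v}'(z)-\mathrm{v}'(y)}{z-y}P_{n}^{2}(y)w(y,t)dy,\qquad B_{n}(z):=\frac{1}{h_{n-1}}\int_{-\infty}^{\infty}\frac{\mathrm{v}'(z)-\mathrm{v}'(y)}{z-y}P_{n}(y)P_{n-1}(y)w(y,t)dy.$$ Then $$A_{n}(z)=2+\frac{R_{n}(t)}{z^2},\qquad B_{n}(z)=\frac{r_{n}(t)}{z}+\frac{(1-(-1)^n)t}{z^3},$$ where $$R_{n}(t):=\frac{2t}{h_{n}}\int_{-\infty}^{\infty}\frac{1}{y^2} P_{n}^{2}(y)w(y,t)dy,\qquad r_{n}(t):=\frac{2t}{h_{n-1}}\int_{-\infty}^{\infty}\frac{1}{y^3} P_{n}(y)P_{n-1}(y)w(y,t)dy.$$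
   Context: Convention: $P_{-1}=0$, so that $B_0=0$ and $r_0=0$. The weight is even, so $P_n$ contains only powers of $x$ of the same parity as $n$, and the monic orthogonal polynomials satisfy $xP_n(x)=P_{n+1}(x)+\beta_nP_{n-1}(x)$ with $\beta_n=h_n/h_{n-1}$. *)

From HB Require Import structures.
From mathcomp Require Import all_boot all_order all_algebra.
From mathcomp Require Import all_classical all_reals all_analysis.
Set Implicit Arguments. Unset Strict Implicit. Unset Printing Implicit Defensive.
Import Order.TTheory GRing.Theory Num.Theory.
Import numFieldNormedType.Exports.
Local Open Scope classical_set_scope.
Local Open Scope ring_scope.

Section Defs.
Variable R : realType.

Definition wt (t x : R) : R := expR (- x ^+ 2 - t / x ^+ 2).

Definition vp (t z : R) : R := 2 * z - 2 * t / z ^+ 3.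

Definition intR (f : R -> R) : R := \int[lebesgue_measure]_(x in [set: R]) f x.

Definition monic_orthogonal (t : R) (P : nat -> {poly R}) : Prop :=
  (forall n, P n \is monic /\ size (P n) = n.+1) /\
  (forall m n, m <> n -> intR (fun x => (P m).[x] * (P n).[x] * wt t x) = 0).

Definition Pprev (P : nat -> {poly R}) (n : nat) : {poly R} :=
  if n is k.+1 then P k else 0.

Definition hn (t : R) (P : nat -> {poly R}) (n : nat) : R :=
  intR (fun y => (P n).[y] ^+ 2 * wt t y).

(* h_{n-1} (only used multiplied by an integral that vanishes when n = 0) *)
Definition hprev (t : R) (P : nat -> {poly R}) (n : nat) : R :=
  intR (fun y => (Pprev P n).[y] ^+ 2 * wt t y).

Definition An (t : R) (P : nat -> {poly R}) (n : nat) (z : R) : R :=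
  (hn t P n)^-1 *
  intR (fun y => (vp t z - vp t y) / (z - y) * (P n).[y] ^+ 2 * wt t y).

Definition Bn (t : R) (P : nat -> {poly R}) (n : nat) (z : R) : R :=
  (hprev t P n)^-1 *
  intR (fun y => (vp t z - vp t y) / (z - y) * (P n).[y] * (Pprev P n).[y] * wt t y).

Definition Rn (t : R) (P : nat -> {poly R}) (n : nat) : R :=
  2 * t / hn t P n * intR (fun y => (y ^+ 2)^-1 * (P n).[y] ^+ 2 * wt t y).

Definition rn (t : R) (P : nat -> {poly R}) (n : nat) : R :=
  2 * t / hprev t P n *
  intR (fun y => (y ^+ 3)^-1 * (P n).[y] * (Pprev P n).[y] * wt t y).

End Defs.

From mathcomp Require Import all_boot all_order all_algebra.
From mathcomp Require Import all_classical all_reals all_analysis.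
From mathcomp Require Import measurable_realfun ring lra.
Import Order.TTheory GRing.Theory Num.Theory.
Local Open Scope classical_set_scope.
Local Open Scope ring_scope.

(* The divided difference (v'(z) - v'(y))/(z - y) equals
   2 + 2t (z^2 + zy + y^2)/(z^3 y^3), so A_n and B_n are combinations of the
   moments m_k(s) = int y^-k s(y) w(y) dy, k <= 3, of s = P_n^2 and
   s = P_n P_(n-1).  As w is even, P_n(-x) = (-1)^n P_n(x), so the moments m_k
   of the wrong parity vanish, and orthogonality kills m_0(P_n P_(n-1)).
   Finally m_1(P_n P_(n-1)) is computed by dividing the odd one of P_n and
   P_(n-1) by y: this leaves a monic polynomial of degree n-1 (giving h_(n-1))
   when n is odd, and a polynomial of degree < n (giving 0) when n is even. *)

Section PolyFacts.
Context {R : idomainType}.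
Implicit Types p q : {poly R}.

Lemma size_sub_coef_monic p q n :
  (size p <= n.+1)%N -> q \is monic -> size q = n.+1 -> (size (p - p`_n *: q)%R <= n)%N.
Proof.
move=> le_pn /monicP q_lc size_q; apply/leq_sizeP => j le_nj; rewrite coefB coefZ.
move: le_nj; rewrite leq_eqVlt => /orP[/eqP <-|lt_nj].
  by rewrite [q`_n](_ : _ = 1) ?mulr1 ?subrr // -q_lc lead_coefE size_q.
by rewrite (nth_default _ (leq_trans le_pn lt_nj)) [q`_j]nth_default ?size_q ?mulr0 ?subr0.
Qed.

Lemma monic_root0_mulX p : p \is monic -> root p 0 ->
  exists q, [/\ p = q * 'X, q \is monic & size q = (size p).-1].
Proof.
move=> p_monic /factor_theorem [q]; rewrite subr0 => def_p.
have q_monic : q \is monic by rewrite -(monicMr _ (monicX R)) -def_p.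
by exists q; rewrite def_p size_mulX ?monic_neq0.
Qed.

End PolyFacts.

Section WeightedMoments.
Variable R : realType.
Local Notation mu := (@lebesgue_measure R).
Local Notation integrableR f := (mu.-integrable [set: R] (EFin \o f)).

Lemma exprn_le_expR (x c : R) (m : nat) : 0 <= x -> 0 < c ->
  x ^+ m <= (m%:R / c) ^+ m * expR (c * x).
Proof.
move=> x_ge0 c_gt0; case: m => [|m].
  have := expR_ge1Dx (c * x); have : 0 <= c * x by rewrite mulr_ge0 // ltW.
  by rewrite !expr0 mul1r; lra.
set a := c * x / m.+1%:R.
have a_ge0 : 0 <= a by rewrite divr_ge0 // mulr_ge0 // ltW.
have a_le : a ^+ m.+1 <= expR a ^+ m.+1.
  by rewrite lerXn2r ?nnegrE ?expR_ge0 //; have := expR_ge1Dx a; lra.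
have m_neq0 : m.+1%:R != 0 :> R by rewrite pnatr_eq0.
have -> : expR (c * x) = expR a ^+ m.+1.
  by rewrite -expRM_natl /a; congr expR; field.
have {1}-> : x = m.+1%:R / c * a by rewrite /a; field; rewrite nat1r m_neq0 gt_eqF.
by rewrite exprMn ler_wpM2l // exprn_ge0 // divr_ge0 // ltW.
Qed.

Lemma normr_le_1Dsqr (x : R) : `|x| <= 1 + x ^+ 2.
Proof. by rewrite -real_normK ?num_real //; have := sqr_ge0 (`|x| - 1 / 2); nra. Qed.

Lemma poly_normr_le (p : {poly R}) :
  exists M N, 0 <= M /\ forall y, `|p.[y]| <= M * (1 + y ^+ 2) ^+ N.
Proof.
elim/poly_ind: p => [|p c [M [N [M_ge0 le_pM]]]].
  by exists 0, 0%N; split => // y; rewrite horner0 normr0 mul0r.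
exists (M + `|c|), N.+1; split => [|y]; first by rewrite addr_ge0.
set u := 1 + y ^+ 2.
have u_ge1 : 1 <= u by rewrite lerDl sqr_ge0.
have uN_ge1 : 1 <= u ^+ N by rewrite exprn_ege1.
have le_pyy : `|p.[y]| * `|y| <= M * u ^+ N * u.
  exact: ler_pM (le_pM y) (normr_le_1Dsqr y).
have le_c : `|c| <= `|c| * (u * u ^+ N) by rewrite ler_peMr // mulr_ege1.
rewrite hornerMXaddC exprS; apply: le_trans (ler_normD _ _) _; rewrite normrM.
nra.
Qed.

Lemma measurable_inv : measurable_fun [set: R] GRing.inv.
Proof.
have -> : [set: R] = [set 0] `|` [set x | x != 0].
  by apply/seteqP; split => x //= _; case: (eqVneq x 0); [left|right].
apply/measurable_funU => //.
  by apply: open_measurable; exact: open_neq.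
split; first exact: measurable_fun_set1.
apply: open_continuous_measurable_fun; first exact: open_neq.
by move=> x; rewrite inE /= => x_neq0; exact: inv_continuous.
Qed.

Lemma measurable_inv_exprn k : measurable_fun [set: R] (fun y => (y ^+ k)^-1).
Proof. exact: measurableT_comp measurable_inv (measurable_funX _ _). Qed.

Lemma measurable_wt t : measurable_fun [set: R] (wt t).
Proof.
apply: measurableT_comp; first exact: measurable_expR.
apply: measurable_funB; first exact: measurableT_comp (measurable_funX _ _).
exact: measurable_funM (measurable_inv_exprn 2).
Qed.

Lemma measurable_vp t : measurable_fun [set: R] (vp t).
Proof.
apply: measurable_funB; first exact: measurable_funM.
exact: measurable_funM (measurable_inv_exprn 3).
Qed.

Definition moment_density (t : R) (k : nat) (p : {poly R}) (y : R) : R :=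
  (y ^+ k)^-1 * p.[y] * wt t y.

Definition moment (t : R) (k : nat) (p : {poly R}) : R :=
  intR (moment_density t k p).

Lemma measurable_moment_density t k p :
  measurable_fun [set: R] (moment_density t k p).
Proof.
apply: measurable_funM (measurable_wt t).
by apply: measurable_funM; [exact: measurable_inv_exprn | exact: measurable_poly].
Qed.

Lemma integrableRD {f g : R -> R} :
  integrableR f -> integrableR g -> integrableR (fun x => f x + g x).
Proof.
by move=> intf intg; apply: eq_integrable (integrableD measurableT intf intg).
Qed.

Lemma integrableRZl (c : R) {f : R -> R} :
  integrableR f -> integrableR (fun x => c * f x).
Proof.
by move=> intf; apply: eq_integrable (integrableZl measurableT c intf).
Qed.

Lemma integrable_expR_half_sqr : integrableR (fun y => expR (- y ^+ 2 / 2)).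
Proof.
have peak_gt0 : 0 < normal_peak (1 : R) by rewrite normal_peak_gt0 // oner_eq0.
have int_pdf : integrableR (normal_pdf 0 1) by exact: integrable_normal_pdf.
have := integrableRZl (normal_peak 1)^-1 int_pdf.
apply: eq_integrable => // y _ /=; rewrite /normal_pdf oner_eq0 /= mulrA mulVf ?gt_eqF // mul1r.
by rewrite /normal_fun subr0 expr1n.
Qed.

Lemma moment_density_le t k p : 0 < t ->
  exists C, forall y, `|moment_density t k p y| <= C * expR (- y ^+ 2 / 2).
Proof.
move=> t_gt0; have [M [N [M_ge0 le_pM]]] := poly_normr_le p.
pose A1 : R := (N%:R / 2^-1) ^+ N; pose A2 := (k%:R / t) ^+ k.
have A1_ge0 : 0 <= A1 by rewrite exprn_ge0 // divr_ge0.
have A2_ge0 : 0 <= A2 by rewrite exprn_ge0 // divr_ge0 // ltW.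
(* |p(y)| <= M A1 e^((1+y^2)/2) and |y|^-k <= A2 e^(t(1+y^-2)); the weight
   e^(-y^2-t/y^2) absorbs both exponentials, up to the factor e^(-y^2/2). *)
exists (A2 * (M * A1) * expR (2^-1 + t)) => y.
have v_ge0 : 0 <= 1 + y ^+ 2 by rewrite addr_ge0 ?sqr_ge0.
have le_p : `|p.[y]| <= M * A1 * expR (2^-1 * (1 + y ^+ 2)).
  rewrite -mulrA; apply: le_trans (le_pM y) _; rewrite ler_wpM2l //.
  exact: exprn_le_expR.
have le_inv : `|(y ^+ k)^-1| <= A2 * expR (t * (1 + (y ^+ 2)^-1)).
  have u_ge0 : 0 <= 1 + (y ^+ 2)^-1 by rewrite addr_ge0 ?invr_ge0 ?sqr_ge0.
  apply: le_trans _ (exprn_le_expR _ _ k u_ge0 t_gt0).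
  rewrite normfV normrX -exprVn lerXn2r ?nnegrE ?invr_ge0 //.
  by rewrite -normfV -exprVn normr_le_1Dsqr.
rewrite /moment_density !normrM (ger0_norm (expR_ge0 _)).
apply: le_trans (ler_wpM2r (expR_ge0 _) (ler_pM _ _ le_inv le_p)) _ => //.
have exp_id : expR (2^-1 + t) * expR (- y ^+ 2 / 2) =
    expR (t * (1 + (y ^+ 2)^-1)) * expR (2^-1 * (1 + y ^+ 2)) * wt t y.
  by rewrite /wt -!expRD; congr expR; lra.
rewrite -[leRHS]mulrA exp_id le_eqVlt; apply/orP; left; apply/eqP; rewrite /wt; ring.
Qed.

Lemma integrable_moment_density t k p : 0 < t ->
  integrableR (moment_density t k p).
Proof.
move=> /(moment_density_le t k p) [C le_C].
apply: le_integrable (integrableRZl C integrable_expR_half_sqr) => //.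
  by apply/measurable_EFinP; exact: measurable_moment_density.
move=> y _ /=; rewrite lee_fin.
exact: le_trans (le_C y) (ler_norm _).
Qed.

Lemma intR_comp_opp (f : R -> R) :
  measurable_fun [set: R] f -> integrableR (fun y => f (- y)) ->
  intR (fun y => f (- y)) = intR f.
Proof.
move=> mf intfN; rewrite /intR /Rintegral; congr fine.
rewrite [RHS](eq_measure_integral (pushforward mu (-%R : R -> measurableTypeR R))).
  by rewrite integral_pushforward //; exact/measurable_EFinP.
by move=> A mA _; apply/esym; apply: lebesgue_measureN.
Qed.

Lemma eq_intR_except (S : set R) (f g : R -> R) : finite_set S ->
  measurable_fun [set: R] f -> measurable_fun [set: R] g ->
  (forall y, ~ S y -> f y = g y) -> intR f = intR g.
Proof.
move=> finS mf mg fg; rewrite /intR /Rintegral; congr fine.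
apply: ae_eq_integral => //; [exact/measurable_EFinP | exact/measurable_EFinP |].
exists S; split; first exact: countable_measurable (finite_set_countable finS).
  exact: countable_lebesgue_measure0 (finite_set_countable finS).
by move=> y /= neq_fg; apply: contrapT => Sy; apply: neq_fg => _; rewrite fg.
Qed.

Lemma finite_roots (p : {poly R}) : p != 0 -> finite_set [set x | root p x].
Proof.
elim: {p}(size p) {-2}p (leqnn (size p)) => [|n IHn] p le_pn p_neq0.
  by move: le_pn; rewrite leqn0 size_poly_eq0 (negbTE p_neq0).
have [[a pa0]|no_root] := pselect (exists a, root p a); last first.
  by rewrite (_ : [set x | _] = set0) // -subset0 => x px; apply: no_root; exists x.
have /factor_theorem [q def_p] := pa0.
have q_neq0 : q != 0 by apply: contra p_neq0 => /eqP q0; rewrite def_p q0 mul0r.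
have le_qn : (size q <= n)%N.
  by rewrite -ltnS (leq_trans _ le_pn) // def_p size_Mmonic ?monicXsubC // size_XsubC addn2.
rewrite (_ : [set x | _] = [set a] `|` [set x | root q x]).
  by rewrite finite_setU; split; [exact: finite_set1 | exact: IHn].
apply/seteqP; split => x /=; rewrite def_p rootM root_XsubC.
  by case/orP => [|/eqP ->]; [right | left].
by case=> [->|->]; rewrite ?eqxx ?orbT.
Qed.

Lemma intR_eq0_ae (f : R -> R) :
  integrableR f -> (forall y, 0 <= f y) -> intR f = 0 ->
  exists2 N, measurable N /\ mu N = 0%E & forall y, ~ N y -> f y = 0.
Proof.
move=> intf f_ge0 int_f0.
have /(ae_eq_integral_abs mu measurableT) : (\int[mu]_(x in setT) `|(f x)%:E| = 0)%E.
  under eq_integral do rewrite abse_EFin ger0_norm //.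
  by rewrite -[LHS]fineK ?integrable_fin_num // -/(Rintegral _ _ _) -/(intR f) int_f0.
case=> [|N [mN muN0 f_neq0]]; first by case/integrableP: intf.
exists N => // y Ny; apply: contrapT => fy_neq0; apply: Ny; apply: f_neq0 => /= /(_ I).
by case.
Qed.

Lemma not_null_finite_cover {N S : set R} : measurable N -> mu N = 0%E ->
  finite_set S -> ~ (`[0%R, 1%R] `<=` N `|` S).
Proof.
move=> mN muN0 finS sub01.
have mS : measurable S by exact: countable_measurable (finite_set_countable finS).
have muS0 : mu S = 0%E by exact: countable_lebesgue_measure0 (finite_set_countable finS).
have le01 : (mu `[0%R, 1%R] <= mu (N `|` S))%E.
  by apply: le_measure => //; rewrite inE //; apply: measurableU.
have leU : (mu (N `|` S) <= mu N + mu S)%E by apply: measureU2.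
have := le_trans le01 leU.
by rewrite lebesgue_measure_itv /= lte_fin ltr01 muN0 muS0 oppr0 !adde0 lee_fin ler10.
Qed.

Lemma moment0_sqr_gt0 t (p : {poly R}) : 0 < t -> p != 0 -> 0 < moment t 0 (p * p).
Proof.
move=> t_gt0 p_neq0; rewrite /moment.
have f_ge0 y : 0 <= moment_density t 0 (p * p) y.
  by rewrite /moment_density /wt expr0 invr1 mul1r hornerM -expr2 mulr_ge0 ?sqr_ge0 ?expR_ge0.
rewrite lt_def Rintegral_ge0 // andbT; apply/eqP => int_f0.
have [N [mN muN0] f_eq0] :=
  intR_eq0_ae _ (integrable_moment_density t 0 (p * p) t_gt0) f_ge0 int_f0.
apply: (not_null_finite_cover mN muN0 (finite_roots p p_neq0)) => y _.
have [|Ny] := pselect (N y); [by left | right].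
move: (f_eq0 y Ny) => /eqP; rewrite /moment_density /wt expr0 invr1 mul1r hornerM.
by rewrite !mulf_eq0 orbb (gt_eqF (expR_gt0 _)) orbF.
Qed.

Lemma moment_density_opp t k p y :
  moment_density t k p (- y) = (-1) ^+ k * moment_density t k (p \Po - 'X) y.
Proof.
rewrite /moment_density horner_comp hornerN hornerX (exprNn y) invfM -exprVn invrN1.
by rewrite /wt sqrrN; ring.
Qed.

Lemma vp_divided_difference (t z y : R) : z != 0 -> y != 0 -> y != z ->
  (vp t z - vp t y) / (z - y) =
  2 + 2 * t / z * (y ^+ 3)^-1 + 2 * t / z ^+ 2 * (y ^+ 2)^-1 + 2 * t / z ^+ 3 * (y ^+ 1)^-1.
Proof.
move=> z_neq0 y_neq0 y_neq_z; rewrite /vp; field.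
by rewrite y_neq0 z_neq0 subr_eq0 eq_sym y_neq_z.
Qed.

Section Moments.
Variable t : R.
Hypothesis t_gt0 : 0 < t.

Lemma momentD k p q : moment t k (p + q) = moment t k p + moment t k q.
Proof.
rewrite /moment /intR -RintegralD //; try exact: integrable_moment_density.
by congr Rintegral; apply/funext => y; rewrite /moment_density hornerD; ring.
Qed.

Lemma momentZ k c p : moment t k (c *: p) = c * moment t k p.
Proof.
rewrite /moment /intR -RintegralZl //; last exact: integrable_moment_density.
by congr Rintegral; apply/funext => y; rewrite /moment_density hornerZ; ring.
Qed.

Lemma moment0 k : moment t k 0 = 0.
Proof. by rewrite -(scale0r 0) momentZ mul0r. Qed.

Lemma momentB k p q : moment t k (p - q) = moment t k p - moment t k q.
Proof. by rewrite -scaleN1r momentD momentZ mulN1r. Qed.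

Lemma moment_comp_opp k p : moment t k p = (-1) ^+ k * moment t k (p \Po - 'X).
Proof.
have intN : integrableR (fun y => moment_density t k p (- y)).
  have := integrableRZl ((-1) ^+ k) (integrable_moment_density t k (p \Po - 'X) t_gt0).
  by apply: eq_integrable => // y _ /=; rewrite moment_density_opp.
rewrite /moment -(intR_comp_opp _ (measurable_moment_density t k p) intN).
under eq_fun do rewrite moment_density_opp.
by rewrite /intR RintegralZl //; exact: integrable_moment_density.
Qed.

Lemma momentMX k p : moment t k.+1 (p * 'X) = moment t k p.
Proof.
apply: (eq_intR_except [set 0]); first exact: finite_set1.
- exact: measurable_moment_density.
- exact: measurable_moment_density.
move=> y /eqP y_neq0; rewrite /moment_density hornerMX exprS invfM.
by field; rewrite expf_neq0.
Qed.

Lemma moment_parity_eq0 i k p : p \Po - 'X = (-1) ^+ i *: p -> odd (i + k) ->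
  moment t k p = 0.
Proof.
move=> p_parity odd_ik; have := moment_comp_opp k p.
rewrite p_parity momentZ -signr_odd -[(-1) ^+ i]signr_odd; move: odd_ik.
by rewrite oddD; case: (odd i); case: (odd k) => //= _; lra.
Qed.

Lemma intR_vp_kernel z s : z != 0 ->
  intR (fun y => (vp t z - vp t y) / (z - y) * s.[y] * wt t y) =
  2 * moment t 0 s + 2 * t / z * moment t 3 s +
  2 * t / z ^+ 2 * moment t 2 s + 2 * t / z ^+ 3 * moment t 1 s.
Proof.
move=> z_neq0; have intm k := integrable_moment_density t k s t_gt0.
rewrite /moment /intR -!RintegralZl // -!RintegralD //.
all: try (repeat apply: integrableRD; apply: integrableRZl; exact: intm).
apply: (eq_intR_except [set 0; z]); first exact: finite_set2.
- apply: measurable_funM; last exact: measurable_wt.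
  apply: measurable_funM; last exact: measurable_poly.
  apply: measurable_funM; first by apply: measurable_funB => //; exact: measurable_vp.
  apply: measurableT_comp; first exact: measurable_inv.
  exact: measurable_funB.
- by repeat apply: measurable_funD; apply: measurable_funM => //; exact: measurable_moment_density.
move=> y /= /not_orP [/eqP y_neq0 /eqP y_neq_z].
rewrite vp_divided_difference // /moment_density expr0 invr1; ring.
Qed.

Section OrthogonalFamily.
Variable P : nat -> {poly R}.
Hypothesis P_orth : monic_orthogonal t P.

Lemma P_monic n : P n \is monic. Proof. by case: (P_orth.1 n). Qed.

Lemma size_P n : size (P n) = n.+1. Proof. by case: (P_orth.1 n). Qed.

Lemma P_neq0 n : P n != 0. Proof. by rewrite -size_poly_eq0 size_P. Qed.

Lemma moment0_P_orth j n : (j < n)%N -> moment t 0 (P j * P n) = 0.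
Proof.
move=> lt_jn; rewrite -(P_orth.2 j n); last by move=> eq_jn; rewrite eq_jn ltnn in lt_jn.
by congr intR; apply/funext => y; rewrite /moment_density expr0 invr1 mul1r hornerM.
Qed.

Lemma moment0_orth_size n (r : {poly R}) :
  (forall j, (j < n)%N -> moment t 0 (P j * r) = 0) ->
  forall q : {poly R}, (size q <= n)%N -> moment t 0 (q * r) = 0.
Proof.
elim: n => [|n IHn] r_orth q le_qn.
  by move: le_qn; rewrite leqn0 size_poly_eq0 => /eqP ->; rewrite mul0r moment0.
rewrite -(subrK (q`_n *: P n) q) mulrDl -scalerAl momentD momentZ r_orth // mulr0 addr0.
apply: IHn; first by move=> j lt_jn; apply/r_orth/ltnW.
exact: size_sub_coef_monic (P_monic n) (size_P n).
Qed.

Lemma P_comp_opp n : P n \Po - 'X = (-1) ^+ n *: P n.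
Proof.
have size_NX : size (- 'X : {poly R}) = 2 by rewrite size_polyN size_polyX.
have NX_NX : (- 'X : {poly R}) \Po (- 'X) = 'X.
  by rewrite -scaleN1r comp_polyZ comp_polyX !scaleN1r opprK.
have sign_sqr : (-1) ^+ n * (-1) ^+ n = 1 :> R by rewrite -expr2 sqrr_sign.
set p := (-1) ^+ n *: (P n \Po - 'X).
have size_p : size p = n.+1 by rewrite size_scale ?signr_eq0 // size_comp_poly2 // size_P.
have p_n : p`_n = 1.
  rewrite -[n]/(n.+1.-1) -size_p -lead_coefE lead_coefZ lead_coef_comp ?size_NX //.
  by rewrite (monicP (P_monic n)) lead_coefN lead_coefX size_P mul1r.
set Q := p - P n.
have size_Q : (size Q <= n)%N.
  by rewrite /Q -[P n]scale1r -p_n size_sub_coef_monic ?size_p ?P_monic ?size_P.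
have Q_orth j : (j < n)%N -> moment t 0 (P j * Q) = 0.
  move=> lt_jn; rewrite mulrBr momentB moment0_P_orth // subr0 -scalerAr momentZ.
  rewrite moment_comp_opp comp_polyM -comp_polyA NX_NX comp_polyXr.
  rewrite (moment0_orth_size _ _ (moment0_P_orth^~ n)) ?mulr0 //.
  by rewrite size_comp_poly2 // size_P.
have : moment t 0 (Q * Q) = 0 by exact: moment0_orth_size Q_orth Q size_Q.
have [Q_eq0 _|Q_neq0] := eqVneq Q 0; last by move/eqP; rewrite gt_eqF // moment0_sqr_gt0.
move/eqP: Q_eq0; rewrite subr_eq0 => /eqP p_eq.
by rewrite -[in RHS]p_eq /p scalerA sign_sqr scale1r.
Qed.

Lemma P_mul_comp_opp m n : (P m * P n) \Po - 'X = (-1) ^+ (m + n) *: (P m * P n).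
Proof. by rewrite comp_polyM !P_comp_opp -scalerAl -scalerAr scalerA exprD. Qed.

Lemma P_root0 n : odd n -> root (P n) 0.
Proof.
move=> odd_n; apply/rootP; have := congr1 (horner^~ 0) (P_comp_opp n).
rewrite /= horner_comp hornerN hornerX oppr0 hornerZ -signr_odd odd_n mulN1r.
lra.
Qed.

Lemma moment1_P_succ m :
  moment t 1 (P m.+1 * P m) = if odd m then 0 else moment t 0 (P m * P m).
Proof.
have [odd_m|even_m] := boolP (odd m).
  have [V [def_Pm _ size_V]] := monic_root0_mulX _ (P_monic m) (P_root0 m odd_m).
  rewrite def_Pm mulrA momentMX mulrC (moment0_orth_size _ _ (moment0_P_orth^~ m.+1)) //.
  by rewrite size_V size_P.
have [U [def_Pm1 U_monic size_U]] := monic_root0_mulX _ (P_monic m.+1) (P_root0 m.+1 even_m).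
rewrite size_P /= in size_U.
rewrite def_Pm1 -mulrA (mulrC 'X) mulrA momentMX -(subrK (P m) U) mulrDl momentD.
rewrite (moment0_orth_size _ _ (moment0_P_orth^~ m)) ?add0r //.
have U_m : U`_m = 1 by rewrite -(monicP U_monic) lead_coefE size_U.
by rewrite -[P m]scale1r -U_m size_sub_coef_monic ?P_monic ?size_P ?size_U.
Qed.

Lemma hn_moment n : hn t P n = moment t 0 (P n * P n).
Proof.
by congr intR; apply/funext => y; rewrite /moment_density expr0 invr1 mul1r hornerM expr2.
Qed.

Lemma An_eq n z : z != 0 -> An t P n z = 2 + Rn t P n / z ^+ 2.
Proof.
move=> z_neq0; have hn_gt0 : 0 < hn t P n by rewrite hn_moment moment0_sqr_gt0 ?P_neq0.
have odd_moment k : odd k -> moment t k (P n * P n) = 0.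
  by move=> odd_k; apply: moment_parity_eq0 (P_mul_comp_opp n n) _; rewrite oddD addnn odd_double.
rewrite /An /Rn.
have -> : intR (fun y => (vp t z - vp t y) / (z - y) * (P n).[y] ^+ 2 * wt t y) =
    intR (fun y => (vp t z - vp t y) / (z - y) * (P n * P n).[y] * wt t y).
  by congr intR; apply/funext => y; rewrite hornerM expr2.
rewrite intR_vp_kernel // (odd_moment 3) // (odd_moment 1) // -hn_moment.
have -> : intR (fun y => (y ^+ 2)^-1 * (P n).[y] ^+ 2 * wt t y) = moment t 2 (P n * P n).
  by congr intR; apply/funext => y; rewrite /moment_density hornerM expr2.
by field; rewrite z_neq0 gt_eqF.
Qed.

Lemma Bn_eq n z : z != 0 -> Bn t P n z = rn t P n / z + (1 - (-1) ^+ n) * t / z ^+ 3.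
Proof.
move=> z_neq0; rewrite /Bn /rn.
have -> : intR (fun y => (vp t z - vp t y) / (z - y) * (P n).[y] * (Pprev P n).[y] * wt t y) =
    intR (fun y => (vp t z - vp t y) / (z - y) * (P n * Pprev P n).[y] * wt t y).
  by congr intR; apply/funext => y; rewrite hornerM mulrA.
have -> : intR (fun y => (y ^+ 3)^-1 * (P n).[y] * (Pprev P n).[y] * wt t y) =
    moment t 3 (P n * Pprev P n).
  by congr intR; apply/funext => y; rewrite /moment_density hornerM mulrA.
rewrite intR_vp_kernel //; case: n => [|m] /=.
  by rewrite mulr0 !moment0 expr0 subrr !(mulr0, mul0r, addr0).
have hm_gt0 : 0 < moment t 0 (P m * P m) by rewrite moment0_sqr_gt0 ?P_neq0.
rewrite (hn_moment m : hprev t P m.+1 = _).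
have m0 : moment t 0 (P m.+1 * P m) = 0 by rewrite mulrC moment0_P_orth.
have m2 : moment t 2 (P m.+1 * P m) = 0.
  by apply: moment_parity_eq0 (P_mul_comp_opp m.+1 m) _; rewrite addSn addnS /= oddD addnn odd_double.
rewrite m0 m2 moment1_P_succ -signr_odd /=.
by case: (odd m); field; rewrite z_neq0 gt_eqF.
Qed.

End OrthogonalFamily.

End Moments.

End WeightedMoments.

Theorem mainTheorem1 (R : realType) (t : R) (P : nat -> {poly R}) :
  0 < t -> monic_orthogonal t P ->
  forall (n : nat) (z : R), z != 0 ->
    An t P n z = 2 + Rn t P n / z ^+ 2 /\
    Bn t P n z = rn t P n / z + (1 - (-1) ^+ n) * t / z ^+ 3.
Proof. by move=> t_gt0 P_orth n z z_neq0; split; [exact: An_eq | exact: Bn_eq]. Qed.
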